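(* With $\overline F_1$, $p$, $\beta$ as in the context, let $h:\overline F_1\to\overline F_1$ be the left $\mathrm{As}$-module map of degree $-1$ defined on free generators by $(\mathsf f_{i_1}\otimes\dots\otimes\mathsf f_{i_{k-1}}\otimes\mathsf f_{1})m^{(k)}.h=(\mathsf f_{i_1}\otimes\dots\otimes\mathsf f_{i_{k-2}}\otimes\mathsf f_{i_{k-1}+1})m^{(k-1)}$ if $k>1$, and $h=0$ on all other generators (those with $k=1$ or with last index $i_k\neq1$). Let $N=1-p\beta+h\partial+\partial h$ (diagrammatic composition). Then $N$ is a left $\mathrm{As}$-module map with $\mathsf f_n.N=0$ for all $n\ge1$, and for $k>1$: (i) $(\mathsf f_{i_1}\otimes\dots\otimes\mathsf f_{i_k})m^{(k)}.N=0$ if $i_k>2$; (ii) $(\mathsf f_{i_1}\otimes\dots\otimes\mathsf f_{i_{k-1}}\otimes\mathsf f_2)m^{(k)}.N=(1^{\otimes(i_1+\dots+i_{k-1})}\otimes m)(\mathsf f_{i_1}\otimes\dots\otimes\mathsf f_{i_{k-2}}\otimes\mathsf f_{i_{k-1}+1})m^{(k-1)}$; (iii) $(\mathsf f_{i_1}\otimes\dots\otimes\mathsf f_{i_{k-1}}\otimes\mathsf f_1)m^{(k)}.N=(1^{\otimes(i_1+\dots+i_{k-1}-1)}\otimes m)(\mathsf f_{i_1}\otimes\dots\otimes\mathsf f_{i_{k-1}})m^{(k-1)}$ if $i_{k-1}>1$; (iv) $(\mathsf f_{i_1}\otimes\dots\otimes\mathsf f_{i_{k-2}}\otimes\mathsf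 f_1\otimes\mathsf f_1)m^{(k)}.N=(1^{\otimes(i_1+\dots+i_{k-2})}\otimes m)(\mathsf f_{i_1}\otimes\dots\otimes\mathsf f_{i_{k-2}}\otimes\mathsf f_1)m^{(k-1)}$ if $(i_1,\dots,i_{k-2})\neq(1,\dots,1)$; (v) $\mathsf f_1^{\otimes k}m^{(k)}.N=(1^{\otimes(k-2)}\otimes m)\mathsf f_1^{\otimes(k-1)}m^{(k-1)}-m^{(k)}\mathsf f_1$. Consequently, if $\overline F_1^{(q)}$ denotes the left $\mathrm{As}$-submodule generated by the $(\mathsf f_{i_1}\otimes\dots\otimes\mathsf f_{i_k})m^{(k)}$ with $k\le q$ ($\overline F_1^{(0)}=0$), then $\overline F_1^{(q)}.N\subset\overline F_1^{(q-1)}$.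
   Context: $\Bbbk$ a commutative ring; Koszul signs; maps are applied on the right ($x.f$) and composed in diagrammatic order. $\mathrm{As}$ is the dg-operad with $\mathrm{As}(0)=0$, $\mathrm{As}(n)=\Bbbk m^{(n)}$ ($n\ge1$, degree 0), $m^{(1)}=1$ the unit, $m=m^{(2)}$, $(m^{(n_1)}\otimes\dots\otimes m^{(n_k)})m^{(k)}=m^{(n_1+\dots+n_k)}$. Left action of operad elements on a bimodule element $x$ of arity $k$ is written $(a_1\otimes\dots\otimes a_k)x$, right action $(x_1\otimes\dots\otimes x_k)b$. $\overline F_1=\mathrm{As}\odot\Bbbk\{\mathsf f_n\mid n\ge1\}\odot\mathrm{As}$ is the free $\mathrm{As}$-bimodule on $\mathsf f_n$ (arity $n$, degree $1-n$) with differential $\mathsf f_k\partial=\sum_{r+2+t=k}(-1)^t(1^{\otimes r}\otimes m\otimes1^{\otimes t})\mathsf f_{k-1}+\sum_{i+j=k,\ i,j\ge1}(-1)^j(\mathsf f_i\otimes\mathsf f_j)m$; as a left $\mathrm{As}$-module it is free on the elements $(\mathsf f_{i_1}\otimes\dots\otimes\mathsf f_{i_k})m^{(k)}$, $k\ge1$. $p:\overline F_1\to\mathrm{As}$ is the bimodule map with $\mathsf f_1\mapsto m^{(1)}$, $\mathsf f_n\mapsto0$ ($n\ge2$), so $(\mathsf f_{i_1}\otimes\dots\otimes\mathsf f_{i_k})m^{(k)}.p=m^{(k)}$ if all $i_s=1$ and $0$ otherwise; $\beta:\mathrm{As}\to\overline F_1$ is the left $\mathrm{As}$-module map $m^{(1)}\mapsto\mathsf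 f_1$. *)

From mathcomp Require Import all_boot all_order all_algebra.
Set Implicit Arguments. Unset Strict Implicit. Unset Printing Implicit Defensive.
Import GRing.Theory.
Local Open Scope ring_scope.

(* Concrete model of the free As-bimodule  Fbar_1 = As (.) k{f_n} (.) As.    *)
(* As a left As-module Fbar_1 is free on the generators                     *)
(*     (f_{i_1} (x) ... (x) f_{i_k}) m^(k),   k >= 1, i_s >= 1,              *)
(* so a k-basis of Fbar_1 consists of the elements                          *)
(*     (m^(n_1) (x) ... (x) m^(n_N)) (f_{i_1} (x) ... (x) f_{i_k}) m^(k)     *)
(* with N = i_1 + ... + i_k and all n_j >= 1.  Such a basis element is      *)
(* encoded by the pair (ns, is) = ([n_1;..;n_N], [i_1;..;i_k]).             *)
(* Its arity is n_1 + ... + n_N, its degree is k - N.                        *)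

Definition basisF := (seq nat * seq nat)%type.

Definition valid_basis (b : basisF) : bool :=
  [&& size b.2 > 0, all (fun i => (0 < i)%N) b.2, all (fun n => 0 < n)%N b.1
    & size b.1 == sumn b.2]%N.

(* The generator (f_{i_1} (x) .. (x) f_{i_k}) m^(k) = (1 (x) .. (x) 1)(..)m^(k).
   For k = 1 this is f_{i_1} itself (m^(1) is the unit). *)
Definition gen (ix : seq nat) : basisF := (nseq (sumn ix) 1%N, ix).

(* Elements of Fbar_1 (and of As) are finite formal k-linear combinations of
   basis elements; two formal combinations represent the same element iff
   they have the same coefficient function. *)
Definition fsum (R : Type) (B : Type) := seq (R * B)%type.

Section FormalSums.
Variables (R : comPzRingType) (B C : eqType).

Definition coef (x : fsum R B) (b : B) : R :=
  \sum_(t <- x | t.2 == b) t.1.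

Definition feq (x y : fsum R B) : Prop := forall b, coef x b = coef y b.

Definition fscale (D : Type) (r : R) (x : fsum R D) : fsum R D :=
  [seq (r * t.1, t.2) | t <- x].

Definition flift (f : B -> fsum R C) (x : fsum R B) : fsum R C :=
  flatten [seq fscale t.1 (f t.2) | t <- x].

End FormalSums.

Notation "x =f y" := (feq x y) (at level 70, no associativity).

Section Maps.
Variable R : comPzRingType.

Definition sgn (e : nat) : R := (-1) ^+ e.

(* merge entries q and q+1 of ns: composing with 1^{(x)q} (x) m (x) 1^{..} *)
Definition merge_at (ns : seq nat) (q : nat) : seq nat :=
  take q ns ++ (nth 0 ns q + nth 0 ns q.+1)%N :: drop q.+2 ns.

(* The differential of Fbar_1 on basis elements.  It is the (bimodule)
   derivation extending
     f_k d = sum_{r+2+t=k} (-1)^t (1^{(x)r} (x) m (x) 1^{(x)t}) f_{k-1}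
           + sum_{i+j=k, i,j>=1} (-1)^j (f_i (x) f_j) m,
   with Koszul signs for maps applied on the right: differentiating the
   factor f_{i_s} of (f_{i_1} (x) .. (x) f_{i_k}) m^(k) produces the sign
   (-1)^{|f_{i_{s+1}}| + .. + |f_{i_k}|}, |f_i| = 1 - i; As has degree 0. *)
Definition dF (b : basisF) : fsum R basisF :=
  let ns := b.1 in let ix := b.2 in
  flatten [seq
    let i := nth 0%N ix s in
    let P := sumn (take s ix) in
    let eps := sgn (sumn [seq (j - 1)%N | j <- drop s.+1 ix]) in
    [seq (eps * sgn (i - 2 - r)%N,
          (merge_at ns (P + r)%N, take s ix ++ (i - 1)%N :: drop s.+1 ix))
      | r <- iota 0 (i - 1)]
    ++
    [seq (eps * sgn (i - a)%N,
          (ns, take s ix ++ [:: a; (i - a)%N] ++ drop s.+1 ix))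
      | a <- iota 1 (i - 1)]
  | s <- iota 0 (size ix)].

(* The bimodule map p : Fbar_1 -> As, f_1 |-> m^(1), f_n |-> 0 (n >= 2).
   As(n) has basis m^(n), encoded by n. *)
Definition pF (b : basisF) : fsum R nat :=
  if all (fun i => (i == 1)%N) b.2 then [:: (1, sumn b.1)] else [::].

(* The left As-module map beta : As -> Fbar_1, m^(1) |-> f_1, so
   m^(n) |-> (m^(n)) f_1. *)
Definition betaF (n : nat) : fsum R basisF := [:: (1, ([:: n], [:: 1%N]))].

(* The left As-module map h of degree -1:
   (f_{i_1} .. f_{i_{k-1}} f_1) m^(k) |-> (f_{i_1} .. f_{i_{k-2}} f_{i_{k-1}+1}) m^(k-1)
   for k > 1, and 0 on the other generators; extended by (a g).h = a (g.h). *)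
Definition hF (b : basisF) : fsum R basisF :=
  let ix := b.2 in
  if (1 < size ix)%N && (last 0%N ix == 1%N)
  then [:: (1, (b.1, rcons (take (size ix - 2) ix)
                            (nth 0%N ix (size ix - 2)).+1))]
  else [::].

Definition NF (b : basisF) : fsum R basisF :=
  [:: (1, b)]
  ++ fscale (-1) (flift betaF (pF b))
  ++ flift dF (hF b)
  ++ flift hF (dF b).

(* Left action of (m^(c_1) (x) .. (x) m^(c_n)) on a basis element of arity n:
   (c)((a) g) = ((c)(a)) g, with (c)(a) computed in As by summing the c's
   over the consecutive blocks of sizes n_1, .., n_N. *)
Fixpoint block_sums (cs ns : seq nat) : seq nat :=
  match ns with
  | [::] => [::]
  | n :: ns' => sumn (take n cs) :: block_sums (drop n cs) ns'
  end.

Definition actF (cs : seq nat) (b : basisF) : basisF := (block_sums cs b.1, b.2).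

(* Fbar_1^(q): the left As-submodule generated by the generators
   (f_{i_1} .. f_{i_k}) m^(k) with k <= q, i.e. the set of finite sums
   sum_j r_j (c_j) g_j with g_j such a generator and (c_j) in As. *)
Definition inFq (q : nat) (x : fsum R basisF) : Prop :=
  exists s : seq (R * (seq nat * seq nat)),
    all (fun t => [&& (0 < size t.2.2)%N, (size t.2.2 <= q)%N,
                      all (fun i => (0 < i)%N) t.2.2,
                      all (fun c => (0 < c)%N) t.2.1
                    & size t.2.1 == sumn t.2.2]) s
    /\ x =f [seq (t.1, actF t.2.1 (gen t.2.2)) | t <- s].

End Maps.

From mathcomp Require Import all_boot all_order all_algebra.
From mathcomp Require Import ring zify.
Import GRing.Theory.
Local Open Scope ring_scope.
Set Implicit Arguments. Unset Strict Implicit.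

(* Everything is computed on the k-basis of Fbar_1.
   1. Formal sums: coefficients of the list operations, and invariance of
      linear extensions under equality of coefficients.
   2. Equivariance: the left action only modifies the operadic part of a
      basis element, compatibly with the merges done by d and with the arity
      read by p; hence d, h, p beta and N commute with it.
   3. The differential splits as (terms from the earlier factors, with a
      Koszul sign) + (terms from the last factor f_x) [dF_rcons].
   4. Last index x >= 2: p and h vanish, and h d reduces to h of the merge
      terms of f_x d [NF_last_ge2].  Last index 1, after f_a: h d and d h
      cancel except for the top merge term of f_{a+1} d [NF_last1].
   5. Specializing to generators gives (i)-(v) and a closed form of N on
      generators with fewer factors, which together with equivariance yields
      the filtration property; the main theorem collects these facts. *)

Section FormalSums.
Variable R : comPzRingType.

Definition fmap (B C : Type) (g : B -> C) (x : fsum R B) : fsum R C :=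
  [seq (t.1, g t.2) | t <- x].

Section Coefficients.
Variable B : eqType.

Lemma coef_nil (b : B) : coef ([::] : fsum R B) b = 0.
Proof. by rewrite /coef big_nil. Qed.

Lemma coef_cons (r : R) (b0 : B) (x : fsum R B) b :
  coef ((r, b0) :: x) b = (if b0 == b then r else 0) + coef x b.
Proof. by rewrite /coef big_cons /=; case: (b0 == b); rewrite ?add0r. Qed.

Lemma coef_cat (x y : fsum R B) b : coef (x ++ y) b = coef x b + coef y b.
Proof. by rewrite /coef big_cat. Qed.

Lemma coef_fscale (r : R) (x : fsum R B) b : coef (fscale r x) b = r * coef x b.
Proof.
elim: x => [|[s d] x IH]; first by rewrite !coef_nil mulr0.
by rewrite [fscale _ _]/= !coef_cons IH mulrDr; case: (d == b); rewrite ?mulr0.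
Qed.

Lemma coef_flatten (L : seq (fsum R B)) b :
  coef (flatten L) b = \sum_(l <- L) coef l b.
Proof.
elim: L => [|l L IH]; first by rewrite big_nil coef_nil.
by rewrite /= coef_cat IH big_cons.
Qed.

(* A weighted sum over a formal combination only depends on its
   coefficient function: regroup the terms along a duplicate-free list of
   the basis elements that occur. *)
Lemma sum_over_support (F : B -> R) (x : fsum R B) (s : seq B) :
  uniq s -> {subset [seq t.2 | t <- x] <= s} ->
  \sum_(t <- x) t.1 * F t.2 = \sum_(b <- s) coef x b * F b.
Proof.
move=> us; elim: x => [|[r b0] x IH] sub.
  by rewrite big_nil big1 // => b _; rewrite coef_nil mul0r.
rewrite big_cons IH; last by move=> y yx; apply: sub; rewrite inE yx orbT.
under [RHS]eq_bigr => b _ do rewrite coef_cons mulrDl.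
rewrite big_split /=; congr (_ + _).
rewrite (bigD1_seq b0) ?sub ?inE ?eqxx //= big1 ?addr0 // => b nb.
by rewrite eq_sym (negbTE nb) mul0r.
Qed.

Lemma feq_weighted_sum (F : B -> R) (x y : fsum R B) :
  x =f y -> \sum_(t <- x) t.1 * F t.2 = \sum_(t <- y) t.1 * F t.2.
Proof.
move=> xy; set s := undup ([seq t.2 | t <- x] ++ [seq t.2 | t <- y]).
have us : uniq s by apply: undup_uniq.
have [sx sy] : {subset [seq t.2 | t <- x] <= s} /\ {subset [seq t.2 | t <- y] <= s}.
  by split=> b bz; rewrite mem_undup mem_cat bz ?orbT.
rewrite (sum_over_support F us sx) (sum_over_support F us sy).
by apply: eq_bigr => b _; rewrite xy.
Qed.

Lemma feq_trans (x y z : fsum R B) : x =f y -> y =f z -> x =f z.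
Proof. by move=> xy yz c; rewrite xy. Qed.

End Coefficients.

Variables B C D : eqType.

Lemma coef_flift (f : B -> fsum R C) x c :
  coef (flift f x) c = \sum_(t <- x) t.1 * coef (f t.2) c.
Proof.
by rewrite /flift coef_flatten big_map; apply: eq_bigr => t _; apply: coef_fscale.
Qed.

Lemma flift_feq (f : B -> fsum R C) x y : x =f y -> flift f x =f flift f y.
Proof. by move=> xy c; rewrite !coef_flift (feq_weighted_sum (fun b => coef (f b) c) xy). Qed.

Lemma flift_single (g : B -> C) (x : fsum R B) :
  flift (fun b => [:: (1, g b)]) x = fmap g x.
Proof. by rewrite /flift /fmap; elim: x => //= [[r b] x] IH; rewrite mulr1 IH. Qed.

Lemma fmap_feq (g : B -> C) (x y : fsum R B) : x =f y -> fmap g x =f fmap g y.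
Proof. by rewrite -!flift_single; apply: flift_feq. Qed.

Lemma fmap_cat (g : B -> C) (x y : fsum R B) : fmap g (x ++ y) = fmap g x ++ fmap g y.
Proof. exact: map_cat. Qed.

Lemma flift_cat (f : B -> fsum R C) x y : flift f (x ++ y) = flift f x ++ flift f y.
Proof. by rewrite /flift map_cat flatten_cat. Qed.

Lemma flift_ext (f f' : B -> fsum R C) x : f =1 f' -> flift f x = flift f' x.
Proof. by move=> ff'; rewrite /flift; congr flatten; apply: eq_map => t; rewrite ff'. Qed.

Lemma flift_fscale (f : B -> fsum R C) r x :
  flift f (fscale r x) = fscale r (flift f x).
Proof.
rewrite /flift /fscale map_flatten -!map_comp; congr flatten; apply: eq_map => t /=.
by rewrite -map_comp; apply: eq_map => u /=; rewrite mulrA.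
Qed.

Lemma flift_fmap (f : C -> fsum R D) (g : B -> C) x :
  flift f (fmap g x) = flift (fun b => f (g b)) x.
Proof. by rewrite /flift /fmap -map_comp. Qed.

Lemma fmap_flift (f : B -> fsum R C) (g : C -> D) x :
  fmap g (flift f x) = flift (fun b => fmap g (f b)) x.
Proof.
rewrite /flift /fmap map_flatten -map_comp; congr flatten; apply: eq_map => t /=.
by rewrite /fscale -!map_comp.
Qed.

Lemma flift_map0 (T : eqType) (f : B -> fsum R C) (c : T -> R) (d : T -> B) s :
  {in s, forall i, f (d i) = [::]} -> flift f [seq (c i, d i) | i <- s] = [::].
Proof.
rewrite /flift -map_comp; elim: s => //= i s IH f0.
by rewrite f0 ?mem_head // IH // => j js; rewrite f0 // inE js orbT.
Qed.

Lemma flift_map1 (T : eqType) (f : B -> fsum R C) (c : T -> R) (d : T -> B) (e : T -> C) s :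
  {in s, forall i, f (d i) = [:: (1, e i)]} ->
  flift f [seq (c i, d i) | i <- s] = [seq (c i, e i) | i <- s].
Proof.
rewrite /flift -map_comp; elim: s => //= i s IH f1.
rewrite f1 ?mem_head //= mulr1 IH // => j js.
by rewrite f1 // inE js orbT.
Qed.

End FormalSums.

(* The left As-action [actF cs] only changes the operadic part [ns] of a
   basis element, by [block_sums cs], and this commutes with the operations
   that [dF], [hF], [pF] perform on [ns]: merging two adjacent entries and
   taking the total arity.  Hence N is a left As-module map. *)

Lemma merge_at_cons (x : nat) (ns : seq nat) q : merge_at (x :: ns) q.+1 = x :: merge_at ns q.
Proof. by []. Qed.

Lemma merge_block_sums (cs ns : seq nat) q :
  merge_at (block_sums cs ns) q = block_sums cs (merge_at ns q).
Proof.
elim: ns cs q => [|n ns IH] cs [|q]; try by rewrite /merge_at /= addn0 take0.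
- case: ns IH => [|m ns] IH; first by rewrite /merge_at /= !addn0.
  by rewrite /merge_at /= takeD sumn_cat drop_drop !drop0 [(m + n)%N]addnC.
- by rewrite merge_at_cons /= -IH.
Qed.

Lemma sumn_block_sums (cs ns : seq nat) : sumn (block_sums cs ns) = sumn (take (sumn ns) cs).
Proof. by elim: ns cs => [|n ns IH] cs /=; rewrite ?take0 // IH takeD sumn_cat. Qed.

Lemma size_block_sums (cs ns : seq nat) : size (block_sums cs ns) = size ns.
Proof. by elim: ns cs => //= n ns IH cs; rewrite IH. Qed.

Section Equivariance.
Variables (R : comPzRingType) (cs : seq nat).

Lemma dF_act (b : basisF) : dF R (actF cs b) = fmap (actF cs) (dF R b).
Proof.
case: b => ns ix; rewrite /dF /actF /fmap /= map_flatten -map_comp; congr flatten.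
apply: eq_map => s /=; rewrite map_cat -!map_comp; congr (_ ++ _).
by apply: eq_map => r /=; rewrite merge_block_sums.
Qed.

Lemma hF_act (b : basisF) : hF R (actF cs b) = fmap (actF cs) (hF R b).
Proof. by case: b => ns ix; rewrite /hF /actF /=; case: ifP. Qed.

Lemma NF_act (b : basisF) : NF R (actF cs b) = fmap (actF cs) (NF R b).
Proof.
rewrite /NF !fmap_cat; congr (_ ++ _ ++ _ ++ _).
- by case: b => ns ix; rewrite /pF /actF /=; case: ifP => _ //=; rewrite sumn_block_sums.
- rewrite hF_act flift_fmap fmap_flift; apply: flift_ext => b'; exact: dF_act.
- rewrite dF_act flift_fmap fmap_flift; apply: flift_ext => b'; exact: hF_act.
Qed.

End Equivariance.

(* Differentiating the last factor f_x of (f_{u_1} .. f_{u_k} f_x) m^(k+1)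
   gives the terms [d_merge_last] (f_x d contributes a multiplication m in
   the operadic part) and [d_split_last] (f_x d contributes f_a (x) f_{x-a});
   differentiating an earlier factor gives (u d) followed by f_x, with the
   Koszul sign (-1)^(x-1). *)
Section LastFactor.
Variable R : comPzRingType.

Definition append_factor (x : nat) (b : basisF) : basisF := (b.1, rcons b.2 x).

Definition d_merge_last (ns u : seq nat) (x : nat) : fsum R basisF :=
  [seq (sgn R (x - 2 - r), (merge_at ns (sumn u + r)%N, rcons u (x - 1)%N))
  | r <- iota 0 (x - 1)%N].

Definition d_split_last (ns u : seq nat) (x : nat) : fsum R basisF :=
  [seq (sgn R (x - a), (ns, u ++ [:: a; (x - a)%N])) | a <- iota 1 (x - 1)%N].

Lemma sgn0 : sgn R 0 = 1. Proof. by rewrite /sgn expr0. Qed.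
Lemma sgnS n : sgn R n.+1 = -1 * sgn R n. Proof. by rewrite /sgn exprS. Qed.
Lemma sgnD m n : sgn R (m + n) = sgn R m * sgn R n. Proof. by rewrite /sgn exprD. Qed.

Lemma cat2 (T : Type) (u : seq T) a b : u ++ [:: a; b] = rcons (rcons u a) b.
Proof. by rewrite -!cats1 -catA. Qed.

Lemma dF_rcons ns u x :
  dF R (ns, rcons u x) =
  fscale (sgn R (x - 1)) (fmap (append_factor x) (dF R (ns, u)))
  ++ (d_merge_last ns u x ++ d_split_last ns u x).
Proof.
rewrite /dF /= size_rcons -(addn1 (size u)) iotaD map_cat flatten_cat /= add0n cats0.
congr (_ ++ _).
  rewrite /fmap /fscale !map_flatten -!map_comp; congr flatten.
  apply/eq_in_map => s; rewrite mem_iota add0n => /andP [_ hs] /=.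
  rewrite nth_rcons hs -cats1 takel_cat ?(ltnW hs) // cats1 drop_rcons //.
  rewrite map_rcons sumn_rcons sgnD !map_cat -!map_comp; congr (_ ++ _).
    by apply: eq_map => r /=; rewrite /append_factor /= rcons_cat; congr (_, _); ring.
  by apply: eq_map => a /=; rewrite /append_factor /= rcons_cat; congr (_, _); ring.
rewrite nth_rcons ltnn eqxx -cats1 takel_cat // take_size drop_oversize ?size_cat ?addn1 //=.
by rewrite sgn0 /d_merge_last /d_split_last; congr (_ ++ _); apply: eq_map => r /=;
  rewrite ?mul1r ?cats1.
Qed.

Lemma hF_last1 ns v a :
  hF R (ns, rcons (rcons v a) 1%N) = [:: (1, (ns, rcons v a.+1))].
Proof.
rewrite /hF /= !size_rcons last_rcons eqxx /= !subSS subn0.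
by rewrite -!cats1 -catA take_size_cat // nth_cat ltnn subnn.
Qed.

Lemma hF_last_ne1 ns w y : y != 1%N -> hF R (ns, rcons w y) = [::].
Proof. by move=> y1; rewrite /hF /= last_rcons (negbTE y1) andbF. Qed.

Lemma pF_last_ne1 ns w y : y != 1%N -> pF R (ns, rcons w y) = [::].
Proof. by move=> y1; rewrite /pF /= all_rcons (negbTE y1). Qed.

(* When the last index is x >= 2, neither p nor h sees the element, and of
   h d only the splitting f_x -> f_{x-1} (x) f_1 survives (with sign -1),
   cancelling the identity term: N = h (merge terms). *)
Lemma h_split_last ns u x : (2 <= x)%N ->
  flift (hF R) (d_split_last ns u x) = [:: (-1, (ns, rcons u x))].
Proof.
move=> x2; rewrite /d_split_last.
have -> : (x - 1 = (x - 2) + 1)%N by lia.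
rewrite iotaD map_cat flift_cat flift_map0; last first.
  move=> a; rewrite mem_iota => /andP [a1 a2]; rewrite cat2 hF_last_ne1 //.
  by apply/eqP; lia.
rewrite (_ : (1 + (x - 2) = x - 1)%N); last by lia.
rewrite /= (_ : (x - (x - 1) = 1)%N); last by lia.
by rewrite cat2 /flift /= hF_last1 /= /sgn expr1 mulr1 (_ : (x - 1).+1 = x); last by lia.
Qed.

Lemma NF_last_ge2 ns u x : (2 <= x)%N ->
  NF R (ns, rcons u x) =f flift (hF R) (d_merge_last ns u x).
Proof.
move=> x2; have x1 : x != 1%N by apply/eqP; lia.
rewrite /NF pF_last_ne1 // hF_last_ne1 // dF_rcons !flift_cat flift_fscale flift_fmap.
have -> : flift (fun e => hF R (append_factor x e)) (dF R (ns, u)) = [::].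
  rewrite (@flift_ext _ _ _ _ (fun _ => [::])); first by elim: (dF R (ns, u)).
  by case=> ? ?; rewrite hF_last_ne1.
rewrite h_split_last //.
by move=> c; rewrite !(coef_cat, coef_cons, coef_nil); case: (_ == c); ring.
Qed.

End LastFactor.

(* When the last index is 1, write the element as (.. f_a f_1) m^(k).  Then
   h d and d h agree up to sign on all terms coming from the factors before
   f_a and from the terms of f_a d, because h turns "(..) f_a' f_1" into
   "(..) f_{a'+1}"; what survives is the top merge term of f_{a+1} d and
   the term -(.. f_a f_1) cancelling the identity, besides p beta. *)
Section LastIndexOne.
Variables (R : comPzRingType) (ns v : seq nat) (a : nat).
Hypothesis a_pos : (0 < a)%N.

(* h applied (after appending f_1) to the terms of f_a d. *)
Definition h_merge_terms : fsum R basisF :=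
  [seq (sgn R (a - 2 - r), (merge_at ns (sumn v + r)%N, rcons v a)) | r <- iota 0 (a - 1)].

Definition h_split_terms : fsum R basisF :=
  [seq (sgn R (a - b), (ns, rcons (rcons v b) (a - b).+1)) | b <- iota 1 (a - 1)].

Let top_merge : basisF := (merge_at ns (sumn v + (a - 1))%N, rcons v a).
Let self : basisF := (ns, rcons (rcons v a) 1%N).

Lemma h_after_merge :
  flift (fun e => hF R (append_factor 1 e)) (d_merge_last R ns v a) = h_merge_terms.
Proof.
apply: flift_map1 => r _; rewrite /append_factor /= hF_last1.
by congr [:: (_, (_, rcons _ _))]; lia.
Qed.

Lemma h_after_split :
  flift (fun e => hF R (append_factor 1 e)) (d_split_last R ns v a) = h_split_terms.
Proof. by apply: flift_map1 => b _; rewrite /append_factor /= cat2 hF_last1. Qed.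

Lemma merge_last_succ :
  d_merge_last R ns v a.+1 = fscale (-1) h_merge_terms ++ [:: (1, top_merge)].
Proof.
rewrite /d_merge_last (_ : (a.+1 - 1 = (a - 1) + 1)%N); last by lia.
rewrite iotaD map_cat /fscale -map_comp; congr (_ ++ _).
  apply/eq_in_map => r; rewrite mem_iota => /andP [_ ra].
  rewrite (_ : (a.+1 - 2 - r = (a - 2 - r).+1)%N) ?sgnS; last by lia.
  by congr (_, (_, rcons _ _)); lia.
rewrite /= add0n (_ : (a.+1 - 2 - (a - 1) = 0)%N) ?sgn0; last by lia.
by congr [:: (_, (_, rcons _ _))]; lia.
Qed.

Lemma split_last_succ :
  d_split_last R ns v a.+1 = fscale (-1) h_split_terms ++ [:: (-1, self)].
Proof.
rewrite /d_split_last (_ : (a.+1 - 1 = (a - 1) + 1)%N); last by lia.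
rewrite iotaD map_cat /fscale -map_comp; congr (_ ++ _).
  apply/eq_in_map => b; rewrite mem_iota => /andP [b1 ba].
  by rewrite (_ : (a.+1 - b = (a - b).+1)%N) ?sgnS ?cat2; last by lia.
rewrite (_ : (1 + (a - 1) = a)%N) /=; last by lia.
by rewrite (_ : (a.+1 - a = 1)%N) ?sgnS ?sgn0 ?mulr1 ?cat2; last by lia.
Qed.

Lemma hF_append_succ (x : fsum R basisF) :
  flift (fun e => hF R (append_factor 1 (append_factor a e))) x = fmap (append_factor a.+1) x.
Proof.
rewrite -flift_single; apply: flift_ext => -[e1 e2].
by rewrite /append_factor /= hF_last1.
Qed.

Let front : fsum R basisF := fmap (append_factor a.+1) (dF R (ns, v)).

Lemma h_d_last1 :
  flift (hF R) (dF R self)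
  =f fscale (sgn R (a - 1)) front ++ (h_merge_terms ++ h_split_terms).
Proof.
rewrite /self dF_rcons /d_merge_last /d_split_last subnn /= !cats0.
rewrite flift_fscale flift_fmap dF_rcons flift_cat flift_fscale flift_fmap.
rewrite hF_append_succ flift_cat h_after_merge h_after_split sgn0 => c.
by rewrite !coef_fscale mul1r.
Qed.

Lemma d_h_last1 :
  flift (dF R) (hF R self)
  =f fscale (- sgn R (a - 1)) front
     ++ (fscale (-1) (h_merge_terms ++ h_split_terms) ++ [:: (1, top_merge); (-1, self)]).
Proof.
rewrite /self hF_last1 /flift /= cats0 dF_rcons merge_last_succ split_last_succ => c.
rewrite (_ : (a.+1 - 1 = (a - 1).+1)%N) ?sgnS; last by lia.
rewrite !(coef_cat, coef_cons, coef_nil, coef_fscale) mul1r.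
by rewrite /front; case: (top_merge == c); case: (self == c); ring.
Qed.

Lemma NF_last1 :
  NF R self =f (1, top_merge) :: fscale (-1) (flift (betaF R) (pF R self)).
Proof.
move=> c; rewrite /NF !coef_cat (d_h_last1 c) (h_d_last1 c).
rewrite !(coef_cat, coef_cons, coef_nil, coef_fscale).
by case: (self == c); case: (top_merge == c); ring.
Qed.

End LastIndexOne.

Section Generators.
Variable R : comPzRingType.

Lemma rcons_nseq (T : Type) n (x : T) : rcons (nseq n x) x = nseq n.+1 x.
Proof. by elim: n => //= n ->. Qed.

Lemma merge_nseq n : merge_at (nseq n.+2 1%N) n = rcons (nseq n 1%N) 2%N.
Proof. by elim: n => // n IH; rewrite [nseq _ _]/= merge_at_cons IH. Qed.

Lemma NF_single_factor n : (0 < n)%N -> NF R (gen [:: n]) =f [::].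
Proof.
rewrite /gen /= addn0; case: n => [|[|n]] // _.
  have d0 : dF R ([:: 1%N], [:: 1%N]) = [::].
    by rewrite (dF_rcons R _ [::] 1) /d_merge_last /d_split_last subnn.
  move=> c; rewrite /NF d0 /= !(coef_cat, coef_cons, coef_nil).
  by case: (_ == c); ring.
apply: feq_trans (NF_last_ge2 R (nseq n.+2 1%N) [::] (isT : 2 <= n.+2)%N) _.
by rewrite flift_map0.
Qed.

Lemma NF_last_gt2 ix :
  (1 < size ix)%N -> (2 < last 0%N ix)%N -> NF R (gen ix) =f [::].
Proof.
case/lastP: ix => [//|u x]; rewrite last_rcons => _ x2.
apply: feq_trans (NF_last_ge2 R _ u (ltnW x2)) _.
by rewrite flift_map0 // => r _; apply: hF_last_ne1; apply/eqP; lia.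
Qed.

Lemma NF_last2 js a : (0 < a)%N ->
  NF R (gen (js ++ [:: a; 2%N]))
  =f [:: (1, (rcons (nseq (sumn js + a) 1%N) 2%N, rcons js a.+1))].
Proof.
move=> a_pos; rewrite /gen cat2.
apply: feq_trans (NF_last_ge2 R _ _ (leqnn 2)) _.
rewrite /d_merge_last /= /flift /= hF_last1 /= sgn0 !mulr1 !sumn_rcons addn0.
by rewrite addn2 merge_nseq.
Qed.

Lemma NF_gen_last1 js a : (0 < a)%N ->
  NF R (gen (rcons (rcons js a) 1%N))
  =f (1, (rcons (nseq (sumn js + (a - 1)) 1%N) 2%N, rcons js a))
     :: fscale (-1) (flift (betaF R) (pF R (gen (rcons (rcons js a) 1%N)))).
Proof.
move=> a_pos; rewrite /gen; apply: feq_trans (NF_last1 R _ _ a_pos) _.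
rewrite !sumn_rcons (_ : (sumn js + a + 1 = (sumn js + (a - 1)).+2)%N); last by lia.
by rewrite merge_nseq.
Qed.

Lemma NF_last1_gt1 js a : (1 < a)%N ->
  NF R (gen (js ++ [:: a; 1%N]))
  =f [:: (1, (rcons (nseq (sumn js + a - 1) 1%N) 2%N, rcons js a))].
Proof.
move=> a1; rewrite cat2; apply: feq_trans (NF_gen_last1 js (ltnW a1)) _.
have -> : pF R (gen (rcons (rcons js a) 1%N)) = [::].
  by rewrite /pF /= !all_rcons (_ : (a == 1%N) = false) ?andbF //; apply/eqP; lia.
by rewrite addnBA 1?ltnW.
Qed.

Lemma NF_last11 js : ~~ all (fun i => (i == 1)%N) js ->
  NF R (gen (js ++ [:: 1%N; 1%N]))
  =f [:: (1, (rcons (nseq (sumn js) 1%N) 2%N, rcons js 1%N))].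
Proof.
move=> not_ones; rewrite cat2; apply: feq_trans (NF_gen_last1 js (ltnSn 0)) _.
have -> : pF R (gen (rcons (rcons js 1%N) 1%N)) = [::].
  by rewrite /pF /= !all_rcons (negbTE not_ones).
by rewrite subnn addn0.
Qed.

Lemma NF_all_ones k : (1 < k)%N ->
  NF R (gen (nseq k 1%N))
  =f [:: (1, (rcons (nseq (k - 2) 1%N) 2%N, nseq (k - 1) 1%N));
         (-1, ([:: k], [:: 1%N]))].
Proof.
move=> k1; have -> : k = (k - 2).+2 by lia.
rewrite -!rcons_nseq; apply: feq_trans (NF_gen_last1 _ (ltnSn 0)) _.
rewrite /pF /= !all_rcons all_nseq /= orbT /= !sumn_rcons sumn_nseq mul1n.
by rewrite subnn addn0 !mulr1 sumn_nseq mul1n !addn1 !subSS subn0.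
Qed.

(* The formulas (i)-(v) in one closed form, indexed by the last two indices
   a, x of the generator (f_v f_a f_x) m^(k); generators with a single
   factor are killed by N. *)
Definition N_last (v : seq nat) (a x : nat) : fsum R basisF :=
  if (2 < x)%N then [::]
  else if x == 2%N then [:: (1, (rcons (nseq (sumn v + a) 1%N) 2%N, rcons v a.+1))]
  else (1, (rcons (nseq (sumn v + a - 1) 1%N) 2%N, rcons v a))
       :: (if all (fun i => i == 1%N) v && (a == 1%N)
           then [:: (-1, ([:: (sumn v + 2)%N], [:: 1%N]))] else [::]).

Definition N_on_gen (ix : seq nat) : fsum R basisF :=
  if rev ix is x :: a :: rv then N_last (rev rv) a x else [::].

Lemma N_on_gen_rcons v a x : N_on_gen (rcons (rcons v a) x) = N_last v a x.
Proof. by rewrite /N_on_gen !rev_rcons revK. Qed.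

Lemma NF_gen ix : (0 < size ix)%N -> all (fun i => (0 < i)%N) ix ->
  NF R (gen ix) =f N_on_gen ix.
Proof.
case/lastP: ix => [//|u x] _; case/lastP: u => [/= /andP [x_pos _]|v a].
  exact: NF_single_factor.
rewrite N_on_gen_rcons /N_last !all_rcons => /and3P [x_pos a_pos _].
case: ifP => x2; first by apply: NF_last_gt2; rewrite ?size_rcons ?last_rcons.
case: ifP => [/eqP ->|x_ne2]; first by rewrite -cat2; apply: NF_last2.
have -> : x = 1%N by move/negbT: x2; move/negbT: x_ne2; lia.
case: (ltngtP a 1) => [|a1|->]; first by lia.
  by rewrite andbF -cat2; apply: NF_last1_gt1.
rewrite andbT; case: ifP => [/all_pred1P ev|not_ones]; last first.
  by rewrite -cat2 addnK; apply: NF_last11; rewrite not_ones.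
rewrite ev !rcons_nseq sumn_nseq mul1n.
apply: feq_trans (NF_all_ones (isT : 1 < (size v).+2)%N) _.
by rewrite !subSS !subn0 addnK addn2.
Qed.

Lemma N_on_gen_support ix y :
  all (fun i => (0 < i)%N) ix -> y \in N_on_gen ix ->
  [/\ valid_basis y.2, (size y.2.2 < size ix)%N & sumn y.2.1 = sumn ix].
Proof.
case/lastP: ix => [//|u x]; case/lastP: u => [//|v a].
rewrite N_on_gen_rcons /N_last !all_rcons => /and3P [x_pos a_pos v_pos].
case: ifP => // x2; case: ifP => [/eqP x_eq2|x_ne2].
  rewrite inE => /eqP -> /=; rewrite /valid_basis /= !size_rcons !all_rcons v_pos.
  by rewrite all_nseq orbT size_nseq !sumn_rcons sumn_nseq x_eq2; split=> //; lia.
have -> : x = 1%N by move/negbT: x2; move/negbT: x_ne2; lia.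
rewrite inE => /orP [/eqP -> /=|].
  rewrite /valid_basis /= !size_rcons !all_rcons v_pos a_pos.
  by rewrite all_nseq orbT size_nseq !sumn_rcons sumn_nseq; split=> //; lia.
case: ifP => //= /andP [_ /eqP ->]; rewrite inE => /eqP -> /=.
by rewrite /valid_basis /= !size_rcons !sumn_rcons; split=> //; lia.
Qed.

End Generators.

(* The filtration: N maps the span of the translates (c) g of generators g
   with at most q factors into the span of those with at most q-1 factors,
   because N commutes with (c) and sends each generator to a combination of
   generators with fewer factors.  [actF_gen] identifies a translate of a
   generator with a basis element; [block_sums_pos] keeps translates valid. *)

Lemma actF_gen cs ix : size cs = sumn ix -> actF cs (gen ix) = (cs, ix).
Proof.
move=> size_cs; rewrite /actF /gen /= -size_cs; congr (_, _).
by elim: cs {size_cs} => //= c cs IH; rewrite take0 drop0 IH addn0.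
Qed.

Lemma block_sums_pos cs ns :
  all (fun c => (0 < c)%N) cs -> all (fun n => (0 < n)%N) ns -> (sumn ns <= size cs)%N ->
  all (fun c => (0 < c)%N) (block_sums cs ns).
Proof.
elim: ns cs => //= n ns IH cs cs_pos /andP [n_pos ns_pos] size_cs.
apply/andP; split.
  case: cs cs_pos size_cs => [|c cs] /=; first by lia.
  by case: n n_pos {ns_pos} => // n _ /andP [c_pos _] _ /=; lia.
apply: IH => //; last by rewrite size_drop; lia.
by apply/allP => c /mem_drop c_cs; move/allP: cs_pos; apply.
Qed.

Lemma NF_filtration (R : comPzRingType) q (x : fsum R basisF) :
  (0 < q)%N -> inFq q x -> inFq q.-1 (flift (NF R) x).
Proof.
move=> q_pos [s [s_gens x_eq]].
exists (flatten [seq [seq (t.1 * y.1, (block_sums t.2.1 y.2.1, y.2.2))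
                      | y <- N_on_gen R t.2.2] | t <- s]); split.
  apply/allP => u /flattenP [l /mapP [t ts ->]] /mapP [y yN ->] /=.
  have /and5P [t_size t_q t_pos c_pos /eqP c_size] := allP s_gens t ts.
  have [/and4P [y_size y_pos y1_pos /eqP y_ar] y_lt y_sum] := N_on_gen_support t_pos yN.
  rewrite y_size y_pos size_block_sums y_ar eqxx andbT /=.
  apply/andP; split; first by case: (q) q_pos (leq_trans y_lt t_q).
  by apply: block_sums_pos => //; rewrite y_sum c_size.
move=> c; rewrite (flift_feq (NF R) x_eq c) /flift -!map_comp.
rewrite map_flatten -map_comp !coef_flatten !big_map.
apply: eq_big_seq => t ts; rewrite /comp; cbv beta.
have /and5P [t_size _ t_pos _ _] := allP s_gens t ts.
rewrite NF_act coef_fscale (fmap_feq (actF t.2.1) (NF_gen R t_size t_pos) c) -coef_fscale.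
congr coef; rewrite /fscale /fmap -!map_comp; apply/eq_in_map => y yN /=.
have [/and4P [_ _ _ /eqP y_ar] _ _] := N_on_gen_support t_pos yN.
by rewrite actF_gen // size_block_sums y_ar.
Qed.

Unset Implicit Arguments. Set Strict Implicit.

Theorem mainTheorem6 (R : comPzRingType) :
  (* N ix a left As-module map *)
  (forall (b : basisF) (cs : seq nat),
      valid_basis b -> all (fun c => (0 < c)%N) cs -> size cs = sumn b.1 ->
      NF R (actF cs b) =f flift (fun b' => [:: (1 : R, actF cs b')]) (NF R b))
  (* f_n . N = 0 *)
  /\ (forall n : nat, (0 < n)%N -> NF R (gen [:: n]) =f [::])
  (* (i) *)
  /\ (forall ix : seq nat,
        (1 < size ix)%N -> all (fun i => (0 < i)%N) ix -> (2 < last 0%N ix)%N ->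
        NF R (gen ix) =f [::])
  (* (ii) *)
  /\ (forall (js : seq nat) (a : nat),
        all (fun i => (0 < i)%N) js -> (0 < a)%N ->
        NF R (gen (js ++ [:: a; 2%N]))
          =f [:: (1, (rcons (nseq (sumn js + a) 1%N) 2%N, rcons js a.+1))])
  (* (iii) *)
  /\ (forall (js : seq nat) (a : nat),
        all (fun i => (0 < i)%N) js -> (1 < a)%N ->
        NF R (gen (js ++ [:: a; 1%N]))
          =f [:: (1, (rcons (nseq (sumn js + a - 1) 1%N) 2%N, rcons js a))])
  (* (iv) *)
  /\ (forall js : seq nat,
        all (fun i => (0 < i)%N) js -> ~~ all (fun i => (i == 1)%N) js ->
        NF R (gen (js ++ [:: 1%N; 1%N]))
          =f [:: (1, (rcons (nseq (sumn js) 1%N) 2%N, rcons js 1%N))])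
  (* (v) *)
  /\ (forall k : nat, (1 < k)%N ->
        NF R (gen (nseq k 1%N))
          =f [:: (1, (rcons (nseq (k - 2) 1%N) 2%N, nseq (k - 1) 1%N));
                 (-1, ([:: k], [:: 1%N]))])
  (* consequence: Fbar_1^(q) . N  ix contained in  Fbar_1^(q-1) *)
  /\ (forall (q : nat) (x : fsum R basisF),
        (0 < q)%N -> inFq q x -> inFq q.-1 (flift (NF R) x)).
Proof.
split; first by move=> b cs _ _ _ c; rewrite NF_act flift_single.
split; first exact: NF_single_factor.
split; first by move=> ix k1 _; apply: NF_last_gt2.
split; first by move=> js a _; apply: NF_last2.
split; first by move=> js a _; apply: NF_last1_gt1.
split; first by move=> js _; apply: NF_last11.
split; first exact: NF_all_ones.
exact: NF_filtration.
Qed.
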